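(* Let $N\ge1$, $K>0$, $r_i>0$, let $(\mu_{ij})$ be a nonnegative, symmetric, irreducible $N\times N$ matrix, and let $\Psi_1,\dots,\Psi_N:\mathbb{R}^N\to\mathbb{R}$ be locally Lipschitz with $\Psi_i(0)=0$, monotone increasing for the componentwise order, and such that for each $i$ there exist positive $R_i,k_i,c_i$ with $c_i(\sum_jv_j)^{k_i}\le\Psi_i(v)$ for all $v\in[0,\infty)^N$ with $\sum_j|v_j|\ge R_i$. Let $v(t)$ be a solution of the Cauchy problem $$\frac{dv_i}{dt}=v_i\left[r_i-\frac{1}{K}\Psi_i(v)\right]+\sum_{j=1}^N\mu_{ij}(v_j-v_i),\qquad i=1,\dots,N,$$ with nonnegative initial datum $v(0)$. Then there exist two constants $C_0,C_1$ and a vector $v_p$ with all components positive such that $v(t)\le C_0e^{C_1t}v_p$ componentwise for all $t$ in the interval of existence. *)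

From HB Require Import structures.
From mathcomp Require Import all_boot all_order all_algebra.
From mathcomp Require Import all_classical all_reals all_analysis.
Set Implicit Arguments. Unset Strict Implicit. Unset Printing Implicit Defensive.
Import Order.TTheory GRing.Theory Num.Theory.
Import numFieldNormedType.Exports.
Local Open Scope classical_set_scope.
Local Open Scope ring_scope.

Definition l1norm {R : realType} {N : nat} (v : 'I_N -> R) : R :=
  \sum_(j < N) `|v j|.

Definition vle {R : realType} {N : nat} (v w : 'I_N -> R) : Prop :=
  forall j, v j <= w j.

(* Irreducible N x N matrix: there is no nonempty proper subset S of indices
   with mu_ij = 0 for all i in S, j not in S (i.e. mu is not permutation-similar
   to a block triangular matrix). *)
Definition irreducible_mx {R : realType} {N : nat} (mu : 'M[R]_N) : Prop :=
  forall S : {set 'I_N}, S != finset.set0 -> S != [set: 'I_N]%SET ->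
    exists i j, [/\ i \in S, j \notin S & mu i j != 0].

Definition locally_lipschitz {R : realType} {N : nat} (f : ('I_N -> R) -> R) : Prop :=
  forall x, exists delta L : R, 0 < delta /\
    forall y z, l1norm (fun j => y j - x j) < delta ->
                l1norm (fun j => z j - x j) < delta ->
                `|f y - f z| <= L * l1norm (fun j => y j - z j).

Definition monotone_incr {R : realType} {N : nat} (f : ('I_N -> R) -> R) : Prop :=
  forall v w, vle v w -> f v <= f w.

Definition Iex {R : realType} (T : \bar R) : set R :=
  [set t | 0 <= t /\ (t%:E < T)%E].

(** Two Gronwall estimates.  First, the solution stays nonnegative: on any
    compact time interval the solution is bounded below, so by monotonicity
    the per-capita rates [r_i - Psi_i(v)/K] are bounded above, and the sum
    [q] of the squared negative parts of the [v_i] satisfies [q' <= C q] with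
    [q(0) = 0]; hence [q = 0].  Second, for a nonnegative solution the
    migration terms cancel in the total population [S = sum_i v_i] because
    [mu] is symmetric, while [Psi_i(v) >= Psi_i(0) = 0]; so
    [S' <= (sum_i r_i) S] and each [v_i(t) <= S(t) <= S(0) e^(sum_i r_i t)].
    The constant vector [v_p = 1] therefore suffices. *)
From HB Require Import structures.
From mathcomp Require Import all_boot all_order all_algebra.
From mathcomp Require Import all_classical all_reals all_analysis.
From mathcomp Require Import ring lra.
Import Order.TTheory GRing.Theory Num.Theory.
Import numFieldNormedType.Exports.
Local Open Scope classical_set_scope.
Local Open Scope ring_scope.

Lemma ler_sum_term {R : numDomainType} {n : nat} (F : 'I_n -> R) (i : 'I_n) :
  (forall j, 0 <= F j) -> F i <= \sum_(j < n) F j.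
Proof.
by move=> F0; rewrite (bigD1 i) //= lerDl; apply: sumr_ge0 => j _.
Qed.

Lemma sum_symmetric_flux_eq0 {R : numDomainType} {n : nat} (mu : 'M[R]_n)
    (w : 'I_n -> R) :
  mu^T = mu -> \sum_(i < n) \sum_(j < n) mu i j * (w j - w i) = 0.
Proof.
move=> musym; have msym i j : mu i j = mu j i by rewrite -[in LHS]musym mxE.
under eq_bigr do under eq_bigr do rewrite mulrBr.
under eq_bigr do rewrite sumrB.
rewrite sumrB exchange_big /=.
by apply/eqP; rewrite subr_eq0; apply/eqP; apply: eq_bigr => j _;
  apply: eq_bigr => k _; rewrite msym.
Qed.

Lemma within_continuous_sum {R : realType} (A : set R) n (F : 'I_n -> R -> R) :
  (forall i, {within A, continuous (F i)}) ->
  {within A, continuous (fun s => \sum_(i < n) F i s)}.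
Proof.
move=> F_cont; apply: (@continuous_big _ _ _ _ _ _ (subspace A)) => //.
  by move=> [a b]; apply: cvgD; [exact: cvg_fst | exact: cvg_snd].
by move=> i _; exact: F_cont.
Qed.

Lemma is_derive_quadratic_remainder {R : realType} (f : R -> R) (x c M : R) :
  0 <= M -> (forall h, `|f (h + x) - f x - c * h| <= M * h ^+ 2) ->
  is_derive x 1 f c.
Proof.
move=> M0 Hf.
have L : (fun h : R => h^-1 *: ((f \o shift x) (h *: 1) - f x)) @ 0^' --> c.
  apply/cvgrPdist_lt => e e0.
  have eM : 0 < e / (M + 1) by rewrite divr_gt0 // ltr_wpDl.
  near=> h.
  have h0 : h != 0 by near: h; exact: nbhs_dnbhs_neq.
  have hs : `|h| < e / (M + 1).
    near: h; apply: (@nbhs_dnbhs _ (0:R)); exact: (@nbhs0_lt R R^o _ eM).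
  rewrite /= /shift /= [h *: 1]mulr1.
  have -> : c - h^-1 * (f (h + x) - f x) = - h^-1 * (f (h + x) - f x - c * h).
    by field.
  rewrite normrM normrN normrV ?unitfE //.
  have hp : 0 < `|h| by rewrite normr_gt0.
  apply: (@le_lt_trans _ _ (`|h|^-1 * (M * h ^+ 2))).
    by rewrite ler_wpM2l // invr_ge0.
  have -> : `|h|^-1 * (M * h ^+ 2) = M * `|h|.
    by rewrite -(real_normK (num_real h)); field; rewrite gt_eqF.
  rewrite ltr_pdivlMr ?ltr_wpDl // in hs.
  by apply: le_lt_trans hs; rewrite mulrDr mulr1 mulrC lerDl.
apply: DeriveDef; first by apply/cvg_ex; exists c.
exact: cvg_lim L.
Unshelve. all: by end_near. Qed.

Lemma gronwall_le {R : realType} (f : R -> R) (C t0 : R) : 0 <= t0 ->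
  {within `[0, t0], continuous f} ->
  (forall s, 0 < s -> s < t0 -> derivable f s 1 /\ derive1 f s <= C * f s) ->
  f t0 <= f 0 * expR (C * t0).
Proof.
move=> t00 f_cont f_der.
pose e s := expR (- C * s).
have e_der s : is_derive s (1:R) e (expR (- C * s) * (- C)).
  apply: is_derive1_comp; rewrite -[X in is_derive _ _ _ X]mulr1.
  exact: is_deriveZ.
have e_cont : continuous e.
  by move=> s; have [e_dif _] := e_der s; apply/differentiable_continuous/derivable1_diffP.
have fe_noninc : (f * e) t0 <= (f * e) 0.
  apply: (@ler0_derive1_le_cc _ (f * e) 0 t0) => //.
  - move=> s; rewrite in_itv /= => /andP[s0 st].
    have [f_dif _] := f_der s s0 st.
    by have [] := is_deriveM (derivableP f_dif) (e_der s).
  - move=> s; rewrite in_itv /= => /andP[s0 st].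
    have [f_dif f'_le] := f_der s s0 st.
    have fe_der := is_deriveM (derivableP f_dif) (e_der s).
    rewrite derive1E derive_val -derive1E /e.
    have := expR_gt0 (- C * s); rewrite /GRing.scale /=; nra.
  - by move=> x; apply: cvgM; [exact: f_cont | exact: (continuous_subspaceT e_cont)].
  - by rewrite in_itv /= lexx t00.
  - by rewrite in_itv /= lexx t00.
have : f t0 * e t0 <= f 0 * e 0 := fe_noninc.
rewrite /e mulr0 expR0 mulr1 => fe_le.
have -> : f t0 = f t0 * expR (- C * t0) * expR (C * t0).
  by rewrite -mulrA -expRD mulNr addNr expR0 mulr1.
by rewrite ler_pM2r ?expR_gt0.
Qed.

(** Unlike the negative part itself, its square is differentiable, so it can
    serve as the quantity in a Gronwall argument. *)
Definition negsq {R : realType} (x : R) := Num.min x 0 ^+ 2.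

Section NegativePartSquared.
Context {R : realType}.
Implicit Types x y m : R.

Lemma negsq_ge0 x : 0 <= negsq x.
Proof. exact: sqr_ge0. Qed.

Lemma negsq_eq0 x : 0 <= x -> negsq x = 0.
Proof.
move=> x_ge0; rewrite /negsq; have [x_le0|_] := leP x 0; last by rewrite expr2 mul0r.
have -> : x = 0 by lra.
by rewrite expr2 mul0r.
Qed.

Lemma negsq_le0 x : negsq x <= 0 -> 0 <= x.
Proof. by rewrite /negsq; have [x_le0|/ltW //] := leP x 0; nra. Qed.

Lemma min0_mul x : Num.min x 0 * x = negsq x.
Proof. by rewrite /negsq; have [|] := leP x 0; rewrite expr2 // !mul0r. Qed.

Lemma is_derive_negsq x : is_derive x (1:R) negsq (2 * Num.min x 0).
Proof.
apply: (@is_derive_quadratic_remainder _ _ x _ 1 ler01) => h; rewrite /negsq mul1r.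
by have [|] := leP x 0; have [|] := leP (h + x) 0;
  rewrite ler_norml; move=> *; apply/andP; split; nra.
Qed.

Lemma negsq_flow_le x y m : 0 <= m ->
  2 * Num.min x 0 * (m * (y - x)) <= m * negsq y.
Proof.
move=> m0; rewrite /negsq.
have := mulr_ge0 m0 (sqr_ge0 (y - x)); have := mulr_ge0 m0 (sqr_ge0 x).
have := mulr_ge0 m0 (sqr_ge0 y).
by have [|] := leP x 0; have [|] := leP y 0; nra.
Qed.

End NegativePartSquared.

Lemma Iex_itv_sub {R : realType} {T : \bar R} {t0 : R} :
  Iex T t0 -> `[0, t0] `<=` Iex T.
Proof.
move=> [_ t0T] s /=; rewrite in_itv /= => /andP[s0 st]; split => //.
by apply: le_lt_trans t0T; rewrite lee_fin.
Qed.

Section PopulationDynamics.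
Context {R : realType} {N : nat} {K : R} {r : 'I_N -> R} {mu : 'M[R]_N}
  {Psi : 'I_N -> ('I_N -> R) -> R} {T : \bar R} {v : R -> 'I_N -> R}.
Hypotheses (K_gt0 : 0 < K) (mu_ge0 : forall i j, 0 <= mu i j)
  (Psi_mono : forall i, monotone_incr (Psi i))
  (v_cont : forall i, {within Iex T, continuous (fun s => v s i)})
  (v_ode : forall i t, 0 < t -> (t%:E < T)%E ->
     derivable (fun s => v s i) t 1 /\
     derive1 (fun s => v s i) t =
       v t i * (r i - K^-1 * Psi i (v t)) + \sum_(j < N) mu i j * (v t j - v t i))
  (v0_ge0 : forall i, 0 <= v 0 i).

Lemma solution_is_derive t0 s i : Iex T t0 -> 0 < s -> s < t0 ->
  is_derive s 1 (fun s => v s i)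
    (v s i * (r i - K^-1 * Psi i (v s)) + \sum_(j < N) mu i j * (v s j - v s i)).
Proof.
move=> [_ t0T] s0 st.
have sT : (s%:E < T)%E by apply: lt_trans t0T; rewrite lte_fin.
have [v_dif v'_eq] := v_ode i s s0 sT.
by rewrite -v'_eq derive1E; exact: derivableP.
Qed.

Lemma solution_lower_bound t0 : Iex T t0 ->
  exists B, forall j s, s \in `[0, t0] -> - B <= v s j.
Proof.
move=> It0; have t00 : 0 <= t0 by case: It0.
have lb j : exists b, forall s, s \in `[0, t0] -> b <= v s j.
  have [c _ c_min] := EVT_min t00 (continuous_subspaceW (Iex_itv_sub It0) (v_cont j)).
  by exists (v c j) => s /c_min.
have [b b_le] := choice lb.
exists (\sum_(j < N) `|b j|) => j s s_in; apply: le_trans (b_le j s s_in).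
rewrite lerNl; apply: le_trans (ler_norm (- b j)) _; rewrite normrN.
exact: (ler_sum_term (fun j => `|b j|)).
Qed.

Lemma solution_rate_ub t0 : Iex T t0 ->
  exists A, 0 <= A /\
    forall i s, s \in `[0, t0] -> r i - K^-1 * Psi i (v s) <= A.
Proof.
move=> /solution_lower_bound[B v_ge].
pose a i := r i - K^-1 * Psi i (fun _ => - B).
exists (\sum_(i < N) `|a i|); split => [|i s s_in]; first exact: sumr_ge0.
apply: le_trans (ler_sum_term (fun i => `|a i|) i _) => //.
apply: le_trans (ler_norm _); rewrite lerD2l lerN2 ler_wpM2l ?invr_ge0 ?(ltW K_gt0) //.
by apply: Psi_mono => j; exact: v_ge.
Qed.

Lemma solution_ge0 t : Iex T t -> forall i, 0 <= v t i.
Proof.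
move=> It; have t_ge0 : 0 <= t by case: It.
have [A [A0 rate_le]] := solution_rate_ub t It.
pose M := \sum_(i < N) \sum_(j < N) mu i j.
pose q s := \sum_(i < N) negsq (v s i).
have q_ge s i : negsq (v s i) <= q s.
  by apply: (ler_sum_term (fun i => negsq (v s i))) => k; exact: negsq_ge0.
suff : q t <= q 0 * expR ((2 * A + M) * t).
  rewrite [q 0]big1 ?mul0r => [q_le0 i|i _]; last exact: negsq_eq0.
  by apply: negsq_le0; apply: le_trans q_le0.
apply: gronwall_le => // [|s s0 st].
  apply: (@within_continuous_sum _ _ _ (fun i => negsq \o (fun s => v s i))) => i x.
  apply: (@continuous_comp (subspace `[0, t]) R R (fun s => v s i) negsq x).
    exact: (continuous_subspaceW (Iex_itv_sub It) (v_cont i)).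
  have [negsq_dif _] := is_derive_negsq (v x i).
  exact/differentiable_continuous/derivable1_diffP.
have q_der : is_derive s 1 q (\sum_(i < N) 2 * Num.min (v s i) 0 *
    (v s i * (r i - K^-1 * Psi i (v s)) + \sum_(j < N) mu i j * (v s j - v s i))).
  have -> : q = \sum_(i < N) (negsq \o (fun s => v s i)) by rewrite fct_sumE.
  apply: is_derive_sum => i.
  exact: (is_derive1_comp (is_derive_negsq (v s i)) (solution_is_derive t s i It s0 st)).
split; first by case: q_der.
rewrite derive1E derive_val mulrDl mulr_sumr /M mulr_suml -big_split /=.
apply: ler_sum => i _; rewrite mulrDr; apply: lerD.
  rewrite -mulrA [Num.min _ _ * _]mulrA min0_mul -[X in _ <= X]mulrA.
  rewrite ler_wpM2l // [X in _ <= X]mulrC ler_wpM2l ?negsq_ge0 //; apply: rate_le.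
  by rewrite in_itv /= !ltW.
rewrite mulr_sumr mulr_suml; apply: ler_sum => j _.
apply: le_trans (negsq_flow_le _ _ _ (mu_ge0 i j)) _.
by rewrite ler_wpM2l.
Qed.

Lemma solution_sum_le t : (forall i, 0 <= r i) -> mu^T = mu ->
  (forall i, Psi i (fun _ => 0) = 0) -> Iex T t ->
  \sum_(i < N) v t i <= (\sum_(i < N) v 0 i) * expR ((\sum_(i < N) r i) * t).
Proof.
move=> r_ge0 musym Psi0 It; have t_ge0 : 0 <= t by case: It.
apply: (@gronwall_le _ (fun s => \sum_(i < N) v s i)) => // [|s s0 st].
  apply: within_continuous_sum => i.
  exact: continuous_subspaceW (Iex_itv_sub It) (v_cont i).
have Is : Iex T s by apply: (Iex_itv_sub It); rewrite /= in_itv /= !ltW.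
have S_der : is_derive s 1 (fun s => \sum_(i < N) v s i) (\sum_(i < N)
    (v s i * (r i - K^-1 * Psi i (v s)) + \sum_(j < N) mu i j * (v s j - v s i))).
  have -> : (fun s => \sum_(i < N) v s i) = \sum_(i < N) (fun s => v s i).
    by rewrite fct_sumE.
  by apply: is_derive_sum => i; exact: (solution_is_derive t s i It s0 st).
split; first by case: S_der.
rewrite derive1E derive_val big_split /= sum_symmetric_flux_eq0 // addr0 mulr_sumr.
apply: ler_sum => i _.
have vs_ge0 := solution_ge0 s Is i.
have : 0 <= K^-1 * Psi i (v s).
  rewrite mulr_ge0 ?invr_ge0 ?(ltW K_gt0) // -(Psi0 i).
  by apply: Psi_mono => j; exact: solution_ge0 s Is j.
have := ler_sum_term r i r_ge0; nra.
Qed.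

End PopulationDynamics.

Theorem lemma2p3 (R : realType) (N : nat) (hN : (1 <= N)%N)
  (K : R) (r : 'I_N -> R) (mu : 'M[R]_N) (Psi : 'I_N -> ('I_N -> R) -> R)
  (T : \bar R) (v : R -> 'I_N -> R) :
  0 < K ->
  (forall i, 0 < r i) ->
  (forall i j, 0 <= mu i j) ->
  mu^T = mu ->
  irreducible_mx mu ->
  (forall i, locally_lipschitz (Psi i)) ->
  (forall i, Psi i (fun _ => 0) = 0) ->
  (forall i, monotone_incr (Psi i)) ->
  (forall i, exists Ri ki ci : R, [/\ 0 < Ri, 0 < ki, 0 < ci &
     forall w : 'I_N -> R, (forall j, 0 <= w j) -> Ri <= l1norm w ->
       ci * (\sum_(j < N) w j) `^ ki <= Psi i w]) ->
  (0 < T)%E ->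
  (forall i, {within Iex T, continuous (fun s => v s i)}) ->
  (forall i t, 0 < t -> (t%:E < T)%E ->
     derivable (fun s => v s i) t 1 /\
     derive1 (fun s => v s i) t =
       v t i * (r i - K^-1 * Psi i (v t)) + \sum_(j < N) mu i j * (v t j - v t i)) ->
  (forall i, 0 <= v 0 i) ->
  exists (C0 C1 : R) (vp : 'I_N -> R),
    (forall i, 0 < vp i) /\
    forall t, Iex T t -> forall i, v t i <= C0 * expR (C1 * t) * vp i.
Proof.
move=> K_gt0 r_gt0 mu_ge0 musym _ _ Psi0 Psi_mono _ _ v_cont v_ode v0_ge0.
have v_ge0 := solution_ge0 K_gt0 mu_ge0 Psi_mono v_cont v_ode v0_ge0.
have S_le := solution_sum_le K_gt0 mu_ge0 Psi_mono v_cont v_ode v0_ge0.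
exists (\sum_(i < N) v 0 i), (\sum_(i < N) r i), (fun _ => 1).
split=> [//|t It i]; rewrite mulr1.
apply: le_trans (S_le t (fun i => ltW (r_gt0 i)) musym Psi0 It).
exact: ler_sum_term (v_ge0 t It).
Qed.
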